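(* Consider the setting in the context: the exact solution $(\phi,p)$ of the periodic crime chemotaxis system with the stated regularity, and numerical solutions $(\phi_h^m,p_h^m)$ produced by the SPIMEX scheme (so in particular $p_h^m\ge0$ pointwise). Let $\tilde C>0$ be such that $\|\nabla_hp^0\|_{L^\infty}\le\tilde C$, and let $$B=\max_{0\le m\le T/\tau}\{\|\phi_h(t_m)\|_{L^\infty}+\|p_h(t_m)\|_{L^\infty}+\|(\nabla p)_h(t_m)\|_{L^\infty}\}.$$ Let $m\ge0$ be an index with $\|\phi_h^m\|_{L^\infty}+\|p_h^m\|_{L^\infty}+\|\nabla_hp_h^m\|_{L^\infty}\le B+1$, and define $$T_1^m=\nabla_h\cdot\Big(\frac{\phi_h(t_m)}{p_h(t_m)+p^0}\nabla_h(p_h(t_m)+p^0)-\frac{\phi_h^m}{p_h^m+p^0}\nabla_h(p_h^m+p^0)\Big).$$ Then for every $f_h\in X$, $$|\langle T_1^m,f_h\rangle|\le C_{B,m_p,\tilde C}\big(\|e_\phi^m\|_{L^2}+\|e_p^m\|_{H^1}\big)\|\nabla_hf_h\|_{L^2},$$ where $e_\phi^m=\phi_h(t_m)-\phi_h^m$, $e_p^m=p_h(t_m)-p_h^m$, and $C_{B,m_p,\tilde C}$ is a constant depending only on $B$, $m_p$ and $\tilde C$.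
   Context: PDE: $D,\eta>0$, $T>0$; $p^0$ smooth $\Omega$-periodic with $0<m_p\le p^0\le M_p$; $(\phi,p)$, $\phi,p\ge0$, solves periodically on $\Omega\times[0,T]$: $\partial_t\phi=\frac D4\nabla\cdot(\nabla\phi-\frac{2\phi}{p+p^0}\nabla(p+p^0))-(p+p^0)\phi$, $\partial_tp=\eta D\Delta p+(p+p^0)\phi-p$, with $\phi\in C^3([0,T];C^4_{per}(\Omega))$, $p\in C^3([0,T];C^5_{per}(\Omega))$ ($C^m_{per}$: $C^m$ with periodic derivatives up to order $m$). Grid and operators: $\Omega$ a square of side $L$, $h=L/N$, $X$ the periodic grid functions; $u_h(t)$ is the grid restriction of $u(\cdot,t)$ (also for $p^0$); $(D_xu)_{i+1/2,j}=(u_{i+1,j}-u_{i,j})/h$, $D_y$ analogous; $(d_xf)_{i,j}=(f_{i+1/2,j}-f_{i-1/2,j})/h$, $d_y$ analogous; $\nabla_h=(D_x,D_y)$, $\nabla_h\cdot(f^x,f^y)=d_xf^x+d_yf^y$, $\Delta_h=\nabla_h\cdot\nabla_h$; $\nabla_h\cdot(w\nabla_hv)=d_x(\bar wD_xv)+d_y(\bar wD_yv)$ with $\bar w$ the face-centred average of $w$. $\langle u,v\rangle=h^2\sum_{i,j=1}^Nu_{i,j}v_{i,j}$, $\|u\|_{L^2}^2=\langle u,u\rangle$, $\|u\|_{H^1}^2=\|u\|_{L^2}^2+\|\nabla_hu\|_{L^2}^2$, $\|u\|_{L^\infty}=\max|u_{i,j}|$. SPIMEX scheme: $\tau>0$,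 $t_k=k\tau$, $\phi_h^0=\phi_h(0)$, $p_h^0=p_h(0)$; predictor for $k\ge1$: $\frac{\tilde\phi_h^{k+1}-\phi_h^k}{\tau}=\frac D8\Delta_h(\tilde\phi_h^{k+1}+\phi_h^k)-\frac{3D}4\nabla_h\cdot(\frac{\phi_h^k}{p_h^k+p^0}\nabla_h(p_h^k+p^0))+\frac D4\nabla_h\cdot(\frac{\phi_h^{k-1}}{p_h^{k-1}+p^0}\nabla_h(p_h^{k-1}+p^0))-\frac32(p_h^k+p^0)\phi_h^k+\frac12(p_h^{k-1}+p^0)\phi_h^{k-1}$, $\frac{\tilde p_h^{k+1}-p_h^k}{\tau}=\frac{\eta D}2\Delta_h(\tilde p_h^{k+1}+p_h^k)+\frac32[(p_h^k+p^0)\phi_h^k-p_h^k]-\frac12[(p_h^{k-1}+p^0)\phi_h^{k-1}-p_h^{k-1}]$; for $k=0$: $\frac{\tilde\phi_h^1-\phi_h^0}{\tau}=\frac D8\Delta_h(\tilde\phi_h^1+\phi_h^0)-\frac D2\nabla_h\cdot(\frac{\phi_h^0}{p_h^0+p^0}\nabla_h(p_h^0+p^0))-(p_h^0+p^0)\phi_h^0$, $\frac{\tilde p_h^1-p_h^0}{\tau}=\frac{\eta D}2\Delta_h(\tilde p_h^1+p_h^0)+(p_h^0+p^0)\phi_h^0-p_h^0$. Corrector: $(\phi_h^{k+1},p_h^{k+1})$ minimizes $\frac12(\|\phi-\tilde\phi_h^{k+1}\|_{L^2}^2+\|p-\tilde p_h^{k+1}\|_{H^1}^2)$ over $X\times X$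 subject to $\phi\ge0$, $p\ge0$ pointwise. *)

From Stdlib Require Export Reals Lra Lia.
From Coquelicot Require Export Coquelicot.
Open Scope R_scope.

(* Periodic grid functions on an N x N grid: values at indices i,j < N are
   the meaningful ones; shifts are taken modulo N. Index i corresponds to
   the grid point x_i = i*h (h = L/N), i = 0..N-1. *)
Definition gf := nat -> nat -> R.

Fixpoint sumN (n : nat) (f : nat -> R) : R :=
  match n with O => 0 | S k => sumN k f + f k end.

(* max of f 0, ..., f (n-1) (and 0); used only for nonnegative quantities *)
Fixpoint maxN (n : nat) (f : nat -> R) : R :=
  match n with O => 0 | S k => Rmax (maxN k f) (f k) end.

Definition nxt (N i : nat) : nat := (S i) mod N.
Definition prv (N i : nat) : nat := (i + N - 1) mod N.

(* forward differences: value at the face (i+1/2, j) stored at index (i,j) *)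
Definition Dx (N : nat) (h : R) (u : gf) : gf :=
  fun i j => (u (nxt N i) j - u i j) / h.
Definition Dy (N : nat) (h : R) (u : gf) : gf :=
  fun i j => (u i (nxt N j) - u i j) / h.
(* backward differences of face-valued functions, giving cell-centred values *)
Definition dx (N : nat) (h : R) (f : gf) : gf :=
  fun i j => (f i j - f (prv N i) j) / h.
Definition dy (N : nat) (h : R) (f : gf) : gf :=
  fun i j => (f i j - f i (prv N j)) / h.
Definition avgx (N : nat) (w : gf) : gf := fun i j => (w i j + w (nxt N i) j) / 2.
Definition avgy (N : nat) (w : gf) : gf := fun i j => (w i j + w i (nxt N j)) / 2.

Definition divh (N : nat) (h : R) (Fx Fy : gf) : gf :=
  fun i j => dx N h Fx i j + dy N h Fy i j.
Definition lap (N : nat) (h : R) (u : gf) : gf := divh N h (Dx N h u) (Dy N h u).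
Definition fluxx (N : nat) (h : R) (w v : gf) : gf := fun i j => avgx N w i j * Dx N h v i j.
Definition fluxy (N : nat) (h : R) (w v : gf) : gf := fun i j => avgy N w i j * Dy N h v i j.
Definition divwgrad (N : nat) (h : R) (w v : gf) : gf :=
  divh N h (fluxx N h w v) (fluxy N h w v).

Definition inner (N : nat) (h : R) (u v : gf) : R :=
  h ^ 2 * sumN N (fun i => sumN N (fun j => u i j * v i j)).
Definition nL2 (N : nat) (h : R) (u : gf) : R := sqrt (inner N h u u).
Definition ngradL2 (N : nat) (h : R) (u : gf) : R :=
  sqrt (inner N h (Dx N h u) (Dx N h u) + inner N h (Dy N h u) (Dy N h u)).
Definition nH1 (N : nat) (h : R) (u : gf) : R :=
  sqrt (inner N h u u + inner N h (Dx N h u) (Dx N h u) + inner N h (Dy N h u) (Dy N h u)).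
Definition nLinf (N : nat) (u : gf) : R :=
  maxN N (fun i => maxN N (fun j => Rabs (u i j))).
Definition ngradLinf (N : nat) (h : R) (u : gf) : R :=
  Rmax (nLinf N (Dx N h u)) (nLinf N (Dy N h u)).

Definition gsub (u v : gf) : gf := fun i j => u i j - v i j.
Definition gadd (u v : gf) : gf := fun i j => u i j + v i j.

Definition restr (h : R) (u : R -> R -> R) : gf :=
  fun i j => u (INR i * h) (INR j * h).

Definition gradLinf_cont (N : nat) (h : R) (u : R -> R -> R) : R :=
  maxN N (fun i => maxN N (fun j =>
    sqrt ((Derive (fun x => u x (INR j * h)) (INR i * h)) ^ 2 +
          (Derive (fun y => u (INR i * h) y) (INR j * h)) ^ 2))).

Definition periodic2 (L : R) (u : R -> R -> R) : Prop :=
  forall x y, u (x + L) y = u x y /\ u x (y + L) = u x y.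

Definition p0_ok (L mp Mp : R) (p0 : R -> R -> R) : Prop :=
  0 < mp /\ periodic2 L p0 /\ (forall x y, mp <= p0 x y <= Mp) /\
  (forall x y, ex_derive (fun s => p0 s y) x /\ ex_derive (fun s => p0 x s) y).

Definition crime_solution (D eta T L : R) (p0 : R -> R -> R)
  (phi p : R -> R -> R -> R) : Prop :=
  let q := fun x y t => p x y t + p0 x y in
  let Fx := fun x y t => Derive (fun s => phi s y t) x
              - 2 * phi x y t / q x y t * Derive (fun s => q s y t) x in
  let Fy := fun x y t => Derive (fun s => phi x s t) y
              - 2 * phi x y t / q x y t * Derive (fun s => q x s t) y in
  (forall t, periodic2 L (fun x y => phi x y t) /\ periodic2 L (fun x y => p x y t)) /\
  (forall x y t, 0 <= t <= T -> 0 <= phi x y t /\ 0 <= p x y t) /\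
  (forall x y t, 0 < t < T ->
     ex_derive (fun s => phi x y s) t /\ ex_derive (fun s => p x y s) t /\
     ex_derive (fun s => Fx s y t) x /\ ex_derive (fun s => Fy x s t) y /\
     ex_derive (fun s => Derive (fun r => p r y t) s) x /\
     ex_derive (fun s => Derive (fun r => p x r t) s) y /\
     Derive (fun s => phi x y s) t =
       D / 4 * (Derive (fun s => Fx s y t) x + Derive (fun s => Fy x s t) y)
       - q x y t * phi x y t /\
     Derive (fun s => p x y s) t =
       eta * D * (Derive (fun s => Derive (fun r => p r y t) s) x
                  + Derive (fun s => Derive (fun r => p x r t) s) y)
       + q x y t * phi x y t - p x y t).

Definition on_grid (N : nat) (P : nat -> nat -> Prop) : Prop :=
  forall i j, (i < N)%nat -> (j < N)%nat -> P i j.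

Definition spimex (N : nat) (h D eta tau : R) (p0h phi_init p_init : gf)
  (phin pn : nat -> gf) : Prop :=
  let q := fun k => gadd (pn k) p0h in
  let chem := fun k => divwgrad N h (fun i j => phin k i j / q k i j) (q k) in
  let reac := fun k i j => q k i j * phin k i j in
  let J := fun (phit pt a b : gf) =>
     / 2 * (nL2 N h (gsub a phit) ^ 2 + nH1 N h (gsub b pt) ^ 2) in
  on_grid N (fun i j => phin O i j = phi_init i j /\ pn O i j = p_init i j) /\
  forall k : nat, exists phit pt : gf,
    (match k with
     | O => on_grid N (fun i j =>
         (phit i j - phin O i j) / tau =
           D / 8 * lap N h (gadd phit (phin O)) i j - D / 2 * chem O i j - reac O i j /\
         (pt i j - pn O i j) / tau =
           eta * D / 2 * lap N h (gadd pt (pn O)) i j + reac O i j - pn O i j)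
     | S k' => on_grid N (fun i j =>
         (phit i j - phin k i j) / tau =
           D / 8 * lap N h (gadd phit (phin k)) i j
           - 3 * D / 4 * chem k i j + D / 4 * chem k' i j
           - 3 / 2 * reac k i j + 1 / 2 * reac k' i j /\
         (pt i j - pn k i j) / tau =
           eta * D / 2 * lap N h (gadd pt (pn k)) i j
           + 3 / 2 * (reac k i j - pn k i j) - 1 / 2 * (reac k' i j - pn k' i j))
     end) /\
    on_grid N (fun i j => 0 <= phin (S k) i j /\ 0 <= pn (S k) i j) /\
    (forall a b : gf, on_grid N (fun i j => 0 <= a i j /\ 0 <= b i j) ->
       J phit pt (phin (S k)) (pn (S k)) <= J phit pt a b).

Definition Bconst (N : nat) (h T tau : R) (phi p : R -> R -> R -> R) : R :=
  maxN (S (Z.to_nat (Int_part (T / tau)))) (fun m =>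
    let t := INR m * tau in
    nLinf N (restr h (fun x y => phi x y t)) + nLinf N (restr h (fun x y => p x y t))
    + gradLinf_cont N h (fun x y => p x y t)).

Definition T1 (N : nat) (h : R) (p0h phie pe phinm pnm : gf) : gf :=
  let qe := gadd pe p0h in
  let qn := gadd pnm p0h in
  let we := fun i j => phie i j / qe i j in
  let wn := fun i j => phinm i j / qn i j in
  divh N h (gsub (fluxx N h we qe) (fluxx N h wn qn))
           (gsub (fluxy N h we qe) (fluxy N h wn qn)).

(* Summation by parts moves the discrete divergence onto f, so by Cauchy-Schwarz it suffices
   to bound the discrete L2 norm of the flux difference.  Writing q = p + p^0 and w = phi / q,
   on each cell face the flux difference is avg(w_e - w_n) D q_n + avg(w_e) D e_p.  Because
   q >= m_p, the L-infinity bounds on phi, grad_h p^m and grad_h p^0 bound D q_n and avg(w_e),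
   and |w_e - w_n| <= |e_phi| / m_p + (B + 1) |e_p| / m_p^2.  Squaring and summing over the
   periodic grid (shifted sums are re-indexed) bounds the squared flux difference by a
   constant times ||e_phi||^2 + ||e_p||_{H^1}^2. *)


Lemma sumN_ext n f g : (forall k, (k < n)%nat -> f k = g k) -> sumN n f = sumN n g.
Proof.
  induction n as [|n IH]; intros H; simpl; auto.
  rewrite IH by (intros; apply H; lia). rewrite H by lia. reflexivity.
Qed.

Lemma sumN_add n f g : sumN n (fun k => f k + g k) = sumN n f + sumN n g.
Proof. induction n as [|n IH]; simpl; [lra|]. rewrite IH. ring. Qed.

Lemma sumN_scal n c f : sumN n (fun k => c * f k) = c * sumN n f.
Proof. induction n as [|n IH]; simpl; [lra|]. rewrite IH. ring. Qed.

Lemma sumN_le n f g : (forall k, (k < n)%nat -> f k <= g k) -> sumN n f <= sumN n g.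
Proof.
  induction n as [|n IH]; intros H; simpl; [lra|].
  apply Rplus_le_compat; [apply IH; intros; apply H|apply H]; lia.
Qed.

Lemma sumN_nonneg n f : (forall k, (k < n)%nat -> 0 <= f k) -> 0 <= sumN n f.
Proof.
  induction n as [|n IH]; intros H; simpl; [lra|].
  apply Rplus_le_le_0_compat; [apply IH; intros; apply H|apply H]; lia.
Qed.

Lemma sumN_swap n m (f : nat -> nat -> R) :
  sumN n (fun i => sumN m (fun j => f i j)) = sumN m (fun j => sumN n (fun i => f i j)).
Proof.
  induction n as [|n IH]; simpl.
  - induction m as [|m IHm]; simpl; lra.
  - rewrite IH, <- sumN_add. reflexivity.
Qed.

Lemma sumN_shiftl n f : sumN (S n) f = f O + sumN n (fun k => f (S k)).
Proof. induction n as [|n IH]; simpl in *; [lra|]. rewrite IH. ring. Qed.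

Lemma nxt_lt N i : (1 <= N)%nat -> (nxt N i < N)%nat.
Proof. intros. apply Nat.mod_upper_bound. lia. Qed.

Lemma prv_nxt N i : (i < N)%nat -> prv N (nxt N i) = i.
Proof.
  intros Hi. unfold prv, nxt.
  destruct (Nat.eq_dec (S i) N) as [<-|Hne].
  - rewrite Nat.Div0.mod_same. replace (0 + S i - 1)%nat with i by lia. apply Nat.mod_small. lia.
  - rewrite (Nat.mod_small (S i)) by lia.
    replace (S i + N - 1)%nat with (i + 1 * N)%nat by lia.
    rewrite Nat.Div0.mod_add. apply Nat.mod_small; lia.
Qed.

Lemma sumN_nxt N f : (1 <= N)%nat -> sumN N (fun i => f (nxt N i)) = sumN N f.
Proof.
  intros HN. destruct N as [|n]; [lia|].
  rewrite (sumN_shiftl n f).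
  change (sumN n (fun i => f (nxt (S n) i)) + f (nxt (S n) n) = f O + sumN n (fun k => f (S k))).
  rewrite (sumN_ext n (fun i => f (nxt (S n) i)) (fun k => f (S k))).
  - unfold nxt. rewrite Nat.Div0.mod_same. ring.
  - intros k Hk. unfold nxt. rewrite Nat.mod_small by lia. reflexivity.
Qed.

Definition gsum (N : nat) (u : gf) : R := sumN N (fun i => sumN N (fun j => u i j)).

Definition gtr (u : gf) : gf := fun i j => u j i.

Lemma gsum_ext N u v : on_grid N (fun i j => u i j = v i j) -> gsum N u = gsum N v.
Proof. intros H. apply sumN_ext; intros. apply sumN_ext; intros. auto. Qed.

Lemma gsum_add N u v : gsum N (fun i j => u i j + v i j) = gsum N u + gsum N v.
Proof. unfold gsum. rewrite <- sumN_add. apply sumN_ext; intros. apply sumN_add. Qed.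

Lemma gsum_scal N c u : gsum N (fun i j => c * u i j) = c * gsum N u.
Proof. unfold gsum. rewrite <- sumN_scal. apply sumN_ext; intros. apply sumN_scal. Qed.

Lemma gsum_le N u v : on_grid N (fun i j => u i j <= v i j) -> gsum N u <= gsum N v.
Proof. intros H. apply sumN_le; intros. apply sumN_le; intros. auto. Qed.

Lemma gsum_sqr_nonneg N u : 0 <= gsum N (fun i j => u i j * u i j).
Proof. apply sumN_nonneg; intros. apply sumN_nonneg; intros. apply Rle_0_sqr. Qed.

Lemma gsum_gtr N u : gsum N (gtr u) = gsum N u.
Proof. symmetry. apply sumN_swap. Qed.

Lemma gsum_nxt N u : (1 <= N)%nat -> gsum N (fun i j => u (nxt N i) j) = gsum N u.
Proof. intros HN. exact (sumN_nxt N (fun i => sumN N (fun j => u i j)) HN). Qed.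

Lemma gsum_dx_mul N h F f : (1 <= N)%nat ->
  gsum N (fun i j => dx N h F i j * f i j) = - gsum N (fun i j => F i j * Dx N h f i j).
Proof.
  intros HN.
  rewrite (gsum_ext N _ (fun i j => / h * (F i j * f i j) + - / h * (F (prv N i) j * f i j)))
    by (intros i j _ _; unfold dx, Rdiv; ring).
  rewrite (gsum_ext N (fun i j => F i j * Dx N h f i j)
             (fun i j => / h * (F i j * f (nxt N i) j) + - / h * (F i j * f i j)))
    by (intros i j _ _; unfold Dx, Rdiv; ring).
  rewrite !gsum_add, !gsum_scal.
  rewrite <- (gsum_nxt N (fun i j => F (prv N i) j * f i j)) by exact HN.
  rewrite (gsum_ext N (fun i j => F (prv N (nxt N i)) j * f (nxt N i) j)
             (fun i j => F i j * f (nxt N i) j))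
    by (intros i j Hi _; rewrite prv_nxt by exact Hi; reflexivity).
  ring.
Qed.

Lemma gsum_dy_mul N h F f : (1 <= N)%nat ->
  gsum N (fun i j => dy N h F i j * f i j) = - gsum N (fun i j => F i j * Dy N h f i j).
Proof.
  intros HN.
  rewrite <- (gsum_gtr N (fun i j => dy N h F i j * f i j)),
          <- (gsum_gtr N (fun i j => F i j * Dy N h f i j)).
  exact (gsum_dx_mul N h (gtr F) (gtr f) HN).
Qed.

Lemma inner_gsum N h u v : inner N h u v = h ^ 2 * gsum N (fun i j => u i j * v i j).
Proof. reflexivity. Qed.

Lemma inner_sqr_nonneg N h u : 0 <= inner N h u u.
Proof. rewrite inner_gsum. apply Rmult_le_pos; [apply pow2_ge_0|apply gsum_sqr_nonneg]. Qed.

Lemma inner_divh N h Fx Fy f : (1 <= N)%nat ->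
  inner N h (divh N h Fx Fy) f = - (inner N h Fx (Dx N h f) + inner N h Fy (Dy N h f)).
Proof.
  intros HN. rewrite !inner_gsum.
  rewrite (gsum_ext N _ (fun i j => dx N h Fx i j * f i j + dy N h Fy i j * f i j))
    by (intros i j _ _; unfold divh; ring).
  rewrite gsum_add, gsum_dx_mul, gsum_dy_mul by exact HN. ring.
Qed.

Lemma inner_expand N h t a b :
  inner N h (fun i j => t * a i j + b i j) (fun i j => t * a i j + b i j)
  = t * t * inner N h a a + 2 * t * inner N h a b + inner N h b b.
Proof.
  rewrite !inner_gsum.
  rewrite (gsum_ext N _ (fun i j => t * t * (a i j * a i j) + 2 * t * (a i j * b i j) + b i j * b i j))
    by (intros i j _ _; ring).
  rewrite !gsum_add, !gsum_scal. ring.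
Qed.

Lemma discriminant_le A P Bq :
  0 <= A -> (forall t, 0 <= t * t * A + 2 * t * P + Bq) -> P * P <= A * Bq.
Proof.
  intros HA0 H.
  destruct (Req_dec A 0) as [HA|HA].
  - subst A. destruct (Req_dec P 0) as [->|HP]; [specialize (H 0); lra|].
    specialize (H (- (Bq + 1) / (2 * P))).
    replace (- (Bq + 1) / (2 * P) * (- (Bq + 1) / (2 * P)) * 0 + 2 * (- (Bq + 1) / (2 * P)) * P + Bq)
      with (-1) in H by (field; exact HP). lra.
  - specialize (H (- P / A)).
    replace (- P / A * (- P / A) * A + 2 * (- P / A) * P + Bq) with ((A * Bq - P * P) / A) in H
      by (field; exact HA).
    assert (Hprod : 0 <= (A * Bq - P * P) / A * A) by (apply Rmult_le_pos; lra).
    replace ((A * Bq - P * P) / A * A) with (A * Bq - P * P) in Hprod by (field; exact HA).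
    lra.
Qed.

Lemma inner_cauchy_schwarz2 N h a1 a2 b1 b2 :
  (inner N h a1 b1 + inner N h a2 b2) * (inner N h a1 b1 + inner N h a2 b2)
  <= (inner N h a1 a1 + inner N h a2 a2) * (inner N h b1 b1 + inner N h b2 b2).
Proof.
  apply discriminant_le.
  - pose proof (inner_sqr_nonneg N h a1); pose proof (inner_sqr_nonneg N h a2). lra.
  - intros t.
    pose proof (inner_sqr_nonneg N h (fun i j => t * a1 i j + b1 i j)) as H1.
    pose proof (inner_sqr_nonneg N h (fun i j => t * a2 i j + b2 i j)) as H2.
    rewrite inner_expand in H1, H2. lra.
Qed.

Lemma Rabs_le_sqrt_mult x A Bq : 0 <= A -> 0 <= Bq -> x * x <= A * Bq -> Rabs x <= sqrt A * sqrt Bq.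
Proof.
  intros HA HB H. rewrite <- sqrt_mult_alt by exact HA. rewrite <- sqrt_Rsqr_abs.
  apply sqrt_le_1_alt. exact H.
Qed.

Lemma inner_divh_le N h Fx Fy f : (1 <= N)%nat ->
  Rabs (inner N h (divh N h Fx Fy) f)
  <= sqrt (inner N h Fx Fx + inner N h Fy Fy) * ngradL2 N h f.
Proof.
  intros HN. rewrite inner_divh, Rabs_Ropp by exact HN.
  apply Rabs_le_sqrt_mult.
  - pose proof (inner_sqr_nonneg N h Fx); pose proof (inner_sqr_nonneg N h Fy). lra.
  - pose proof (inner_sqr_nonneg N h (Dx N h f)); pose proof (inner_sqr_nonneg N h (Dy N h f)). lra.
  - apply inner_cauchy_schwarz2.
Qed.

Lemma sqr_sum5_le x1 x2 x3 x4 x5 :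
  (x1 + x2 + x3 + x4 + x5) * (x1 + x2 + x3 + x4 + x5)
  <= 5 * (x1 * x1 + x2 * x2 + x3 * x3 + x4 * x4 + x5 * x5).
Proof.
  pose proof (Rle_0_sqr (x1 - x2)); pose proof (Rle_0_sqr (x1 - x3));
  pose proof (Rle_0_sqr (x1 - x4)); pose proof (Rle_0_sqr (x1 - x5));
  pose proof (Rle_0_sqr (x2 - x3)); pose proof (Rle_0_sqr (x2 - x4));
  pose proof (Rle_0_sqr (x2 - x5)); pose proof (Rle_0_sqr (x3 - x4));
  pose proof (Rle_0_sqr (x3 - x5)); pose proof (Rle_0_sqr (x4 - x5)).
  unfold Rsqr in *. lra.
Qed.

Lemma Rsqr_le_of_Rabs_le x y : Rabs x <= y -> x * x <= y * y.
Proof.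
  intros H. change (Rsqr x <= y * y). rewrite Rsqr_abs. unfold Rsqr.
  pose proof (Rabs_pos x). nra.
Qed.

Lemma Rabs_mult_self x : Rabs x * Rabs x = x * x.
Proof. rewrite <- Rabs_mult. apply Rabs_pos_eq, Rle_0_sqr. Qed.

Lemma Rabs_div_le a q mp B : 0 < mp -> mp <= q -> Rabs a <= B -> Rabs (a / q) <= B / mp.
Proof.
  intros Hmp Hq Ha. unfold Rdiv. rewrite Rabs_mult, Rabs_inv, (Rabs_pos_eq q) by lra.
  apply Rmult_le_compat; auto using Rabs_pos.
  - left. apply Rinv_0_lt_compat. lra.
  - apply Rinv_le_contravar; lra.
Qed.

Lemma Rabs_div_sub_div_le a b q q' mp Bn :
  0 < mp -> mp <= q -> mp <= q' -> Rabs b <= Bn ->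
  Rabs (a / q - b / q') <= Rabs (a - b) / mp + Bn * Rabs (q - q') / (mp * mp).
Proof.
  intros Hmp Hq Hq' Hb.
  replace (a / q - b / q') with ((a - b) / q + b * (q' - q) / (q * q')) by (field; lra).
  eapply Rle_trans; [apply Rabs_triang|]. apply Rplus_le_compat.
  - apply Rabs_div_le; lra.
  - apply Rabs_div_le; [nra|nra|].
    rewrite Rabs_mult, (Rabs_minus_sym q' q).
    apply Rmult_le_compat_r; auto using Rabs_pos.
Qed.

Definition face_flux (h a a' q q' : R) : R := (a / q + a' / q') / 2 * ((q' - q) / h).

Definition flux_gain (mp B Bn K : R) : R := K / (2 * mp) + K * Bn / (2 * (mp * mp)) + B / mp.
Definition flux_const (mp B Bn K : R) : R := 5 * (flux_gain mp B Bn K * flux_gain mp B Bn K).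

Lemma face_flux_diff_abs_le h mp B Bn K a a' b b' qe qe' qn qn' :
  0 < mp -> mp <= qe -> mp <= qe' -> mp <= qn -> mp <= qn' ->
  Rabs a <= B -> Rabs a' <= B -> Rabs b <= Bn -> Rabs b' <= Bn -> Rabs ((qn' - qn) / h) <= K ->
  Rabs (face_flux h a a' qe qe' - face_flux h b b' qn qn')
  <= flux_gain mp B Bn K *
     (Rabs (a - b) + Rabs (a' - b') + Rabs (qe - qn) + Rabs (qe' - qn')
      + Rabs (((qe' - qn') - (qe - qn)) / h)).
Proof.
  intros Hmp Hqe Hqe' Hqn Hqn' Ha Ha' Hb Hb' HK.
  set (Dd := ((qe' - qn') - (qe - qn)) / h).
  set (d := a / qe - b / qn). set (d' := a' / qe' - b' / qn').
  assert (HB : 0 <= B) by (pose proof (Rabs_pos a); lra).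
  assert (HBn : 0 <= Bn) by (pose proof (Rabs_pos b); lra).
  assert (HK0 : 0 <= K) by (pose proof (Rabs_pos ((qn' - qn) / h)); lra).
  assert (Hsplit : face_flux h a a' qe qe' - face_flux h b b' qn qn'
                   = (d + d') / 2 * ((qn' - qn) / h) + (a / qe + a' / qe') / 2 * Dd)
    by (unfold face_flux, d, d', Dd, Rdiv; ring).
  assert (Hd : Rabs d <= Rabs (a - b) / mp + Bn * Rabs (qe - qn) / (mp * mp))
    by (apply Rabs_div_sub_div_le; lra).
  assert (Hd' : Rabs d' <= Rabs (a' - b') / mp + Bn * Rabs (qe' - qn') / (mp * mp))
    by (apply Rabs_div_sub_div_le; lra).
  assert (Hw : Rabs ((a / qe + a' / qe') / 2) <= B / mp).
  { apply Rle_trans with ((Rabs (a / qe) + Rabs (a' / qe')) / 2).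
    - apply Rabs_div_le; [lra|lra|apply Rabs_triang].
    - pose proof (Rabs_div_le a qe mp B); pose proof (Rabs_div_le a' qe' mp B). lra. }
  rewrite Hsplit. eapply Rle_trans; [apply Rabs_triang|]. rewrite !Rabs_mult.
  apply Rle_trans with ((Rabs d + Rabs d') / 2 * K + B / mp * Rabs Dd).
  { apply Rplus_le_compat.
    - apply Rmult_le_compat; auto using Rabs_pos.
      apply Rabs_div_le; [lra|lra|apply Rabs_triang].
    - apply Rmult_le_compat_r; auto using Rabs_pos. }
  set (g1 := K / (2 * mp)). set (g2 := K * Bn / (2 * (mp * mp))). set (g3 := B / mp).
  assert (0 <= g1 /\ 0 <= g2 /\ 0 <= g3) as (Hg1 & Hg2 & Hg3).
  { unfold g1, g2, g3, Rdiv.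
    repeat split; apply Rmult_le_pos; try apply Rmult_le_pos; auto;
      left; apply Rinv_0_lt_compat; nra. }
  apply Rle_trans with (g1 * (Rabs (a - b) + Rabs (a' - b'))
                        + g2 * (Rabs (qe - qn) + Rabs (qe' - qn')) + g3 * Rabs Dd).
  - assert (Hdd : (Rabs d + Rabs d') / 2 * K <= (Rabs (a - b) / mp + Bn * Rabs (qe - qn) / (mp * mp)
              + (Rabs (a' - b') / mp + Bn * Rabs (qe' - qn') / (mp * mp))) / 2 * K)
      by (apply Rmult_le_compat_r; lra).
    eapply Rle_trans; [apply Rplus_le_compat_r, Hdd|]. right. unfold g1, g2, g3. field. lra.
  - unfold flux_gain. fold g1 g2 g3.
    pose proof (Rabs_pos (a - b)); pose proof (Rabs_pos (a' - b')); pose proof (Rabs_pos (qe - qn));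
    pose proof (Rabs_pos (qe' - qn')); pose proof (Rabs_pos Dd). nra.
Qed.

Lemma face_flux_diff_sqr_le h mp B Bn K a a' b b' qe qe' qn qn' :
  0 < mp -> mp <= qe -> mp <= qe' -> mp <= qn -> mp <= qn' ->
  Rabs a <= B -> Rabs a' <= B -> Rabs b <= Bn -> Rabs b' <= Bn -> Rabs ((qn' - qn) / h) <= K ->
  (face_flux h a a' qe qe' - face_flux h b b' qn qn') *
  (face_flux h a a' qe qe' - face_flux h b b' qn qn')
  <= flux_const mp B Bn K *
     ((a - b) * (a - b) + (a' - b') * (a' - b') + (qe - qn) * (qe - qn)
      + (qe' - qn') * (qe' - qn') + ((qe' - qn') - (qe - qn)) / h * (((qe' - qn') - (qe - qn)) / h)).
Proof.
  intros Hmp Hqe Hqe' Hqn Hqn' Ha Ha' Hb Hb' HK.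
  eapply Rle_trans; [apply Rsqr_le_of_Rabs_le, face_flux_diff_abs_le; eassumption|].
  pose proof (sqr_sum5_le (Rabs (a - b)) (Rabs (a' - b')) (Rabs (qe - qn)) (Rabs (qe' - qn'))
                (Rabs (((qe' - qn') - (qe - qn)) / h))) as Hsum.
  rewrite !Rabs_mult_self in Hsum.
  unfold flux_const. set (g := flux_gain mp B Bn K).
  pose proof (Rle_0_sqr g). unfold Rsqr in *. nra.
Qed.

Lemma maxN_nonneg n f : 0 <= maxN n f.
Proof. induction n as [|n IH]; simpl; [lra|]. eapply Rle_trans; [exact IH|apply Rmax_l]. Qed.

Lemma maxN_ge n f k : (k < n)%nat -> f k <= maxN n f.
Proof.
  induction n as [|n IH]; intros Hk; [lia|]. simpl.
  destruct (Nat.eq_dec k n) as [->|Hne]; [apply Rmax_r|].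
  eapply Rle_trans; [apply IH; lia|apply Rmax_l].
Qed.

Lemma nLinf_nonneg N u : 0 <= nLinf N u.
Proof. apply maxN_nonneg. Qed.

Lemma ngradLinf_nonneg N h u : 0 <= ngradLinf N h u.
Proof. eapply Rle_trans; [apply nLinf_nonneg|apply Rmax_l]. Qed.

Lemma Rabs_le_nLinf N u : on_grid N (fun i j => Rabs (u i j) <= nLinf N u).
Proof.
  intros i j Hi Hj.
  eapply Rle_trans; [|apply (maxN_ge N (fun i => maxN N (fun j => Rabs (u i j))) i Hi)].
  apply (maxN_ge N (fun j => Rabs (u i j)) j Hj).
Qed.

Lemma Rabs_Dx_le_ngradLinf N h u : on_grid N (fun i j => Rabs (Dx N h u i j) <= ngradLinf N h u).
Proof. intros i j Hi Hj. eapply Rle_trans; [apply (Rabs_le_nLinf N); auto|apply Rmax_l]. Qed.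

Lemma Rabs_Dy_le_ngradLinf N h u : on_grid N (fun i j => Rabs (Dy N h u i j) <= ngradLinf N h u).
Proof. intros i j Hi Hj. eapply Rle_trans; [apply (Rabs_le_nLinf N); auto|apply Rmax_r]. Qed.

Lemma on_grid_le_trans N (u : gf) a b :
  on_grid N (fun i j => u i j <= a) -> a <= b -> on_grid N (fun i j => u i j <= b).
Proof. intros H Hab i j Hi Hj. specialize (H i j Hi Hj). lra. Qed.

Lemma on_grid_gtr N (P : nat -> nat -> Prop) : on_grid N P -> on_grid N (fun i j => P j i).
Proof. intros H i j Hi Hj. exact (H j i Hj Hi). Qed.

Lemma Rabs_Dx_gadd_le N h u v i j Ku Kv :
  Rabs (Dx N h u i j) <= Ku -> Rabs (Dx N h v i j) <= Kv -> Rabs (Dx N h (gadd u v) i j) <= Ku + Kv.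
Proof.
  intros Hu Hv. unfold Dx, gadd in *.
  replace ((u (nxt N i) j + v (nxt N i) j - (u i j + v i j)) / h)
    with ((u (nxt N i) j - u i j) / h + (v (nxt N i) j - v i j) / h) by (unfold Rdiv; ring).
  eapply Rle_trans; [apply Rabs_triang|]. lra.
Qed.

Definition flux_diff_x (N : nat) (h : R) (p0 phie pe phin pn : gf) : gf :=
  gsub (fluxx N h (fun i j => phie i j / gadd pe p0 i j) (gadd pe p0))
       (fluxx N h (fun i j => phin i j / gadd pn p0 i j) (gadd pn p0)).

Definition flux_diff_y (N : nat) (h : R) (p0 phie pe phin pn : gf) : gf :=
  gsub (fluxy N h (fun i j => phie i j / gadd pe p0 i j) (gadd pe p0))
       (fluxy N h (fun i j => phin i j / gadd pn p0 i j) (gadd pn p0)).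

Section FluxDifference.

Variables (N : nat) (h mp B Bn Kn K0 : R) (p0 pe pn phie phin : gf).
Hypothesis HN : (1 <= N)%nat.
Hypothesis Hmp : 0 < mp.
Hypothesis Hp0 : on_grid N (fun i j => mp <= p0 i j).
Hypothesis Hpe : on_grid N (fun i j => 0 <= pe i j).
Hypothesis Hpn : on_grid N (fun i j => 0 <= pn i j).
Hypothesis Hphie : on_grid N (fun i j => Rabs (phie i j) <= B).
Hypothesis Hphin : on_grid N (fun i j => Rabs (phin i j) <= Bn).
Hypothesis HDxpn : on_grid N (fun i j => Rabs (Dx N h pn i j) <= Kn).
Hypothesis HDxp0 : on_grid N (fun i j => Rabs (Dx N h p0 i j) <= K0).

Let qe := gadd pe p0.
Let qn := gadd pn p0.
Let Gx := flux_diff_x N h p0 phie pe phin pn.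
Let eph := gsub phie phin.
Let ep := gsub pe pn.

Lemma gsum_fluxx_diff_sqr_le :
  gsum N (fun i j => Gx i j * Gx i j)
  <= flux_const mp B Bn (Kn + K0) *
     (2 * gsum N (fun i j => eph i j * eph i j) + 2 * gsum N (fun i j => ep i j * ep i j)
      + gsum N (fun i j => Dx N h ep i j * Dx N h ep i j)).
Proof.
  set (c := flux_const mp B Bn (Kn + K0)).
  apply Rle_trans with (gsum N (fun i j => c *
    (eph i j * eph i j + eph (nxt N i) j * eph (nxt N i) j + ep i j * ep i j
     + ep (nxt N i) j * ep (nxt N i) j + Dx N h ep i j * Dx N h ep i j))).
  - apply gsum_le. intros i j Hi Hj.
    pose proof (nxt_lt N i HN) as Hi'.
    eapply Rle_trans.
    + apply (face_flux_diff_sqr_le h mp B Bn (Kn + K0) (phie i j) (phie (nxt N i) j)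
               (phin i j) (phin (nxt N i) j) (qe i j) (qe (nxt N i) j) (qn i j) (qn (nxt N i) j));
        unfold qe, qn, gadd; auto.
      * pose proof (Hpe i j Hi Hj); pose proof (Hp0 i j Hi Hj); lra.
      * pose proof (Hpe _ j Hi' Hj); pose proof (Hp0 _ j Hi' Hj); lra.
      * pose proof (Hpn i j Hi Hj); pose proof (Hp0 i j Hi Hj); lra.
      * pose proof (Hpn _ j Hi' Hj); pose proof (Hp0 _ j Hi' Hj); lra.
      * apply (Rabs_Dx_gadd_le N h pn p0 i j); auto.
    + right. unfold c, eph, ep, qe, qn, gsub, gadd, Dx, Rdiv. ring.
  - rewrite gsum_scal, !gsum_add, (gsum_nxt N (fun i j => eph i j * eph i j)),
      (gsum_nxt N (fun i j => ep i j * ep i j)) by exact HN.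
    right. unfold c. ring.
Qed.

End FluxDifference.

Lemma flux_const_nonneg mp B Bn K : 0 <= flux_const mp B Bn K.
Proof. unfold flux_const. pose proof (Rle_0_sqr (flux_gain mp B Bn K)). unfold Rsqr in *. lra. Qed.

Lemma sqrt_scal_sum_sqr_le k x y :
  0 <= k -> 0 <= x -> 0 <= y -> sqrt (k * (x * x + y * y)) <= sqrt k * (x + y).
Proof.
  intros Hk Hx Hy. rewrite <- (sqrt_square (x + y)) by lra. rewrite <- sqrt_mult_alt by exact Hk.
  apply sqrt_le_1_alt. apply Rmult_le_compat_l; nra.
Qed.

Lemma nL2_sqr N h u : nL2 N h u * nL2 N h u = inner N h u u.
Proof. apply sqrt_sqrt, inner_sqr_nonneg. Qed.

Lemma nH1_sqr N h u :
  nH1 N h u * nH1 N h u = inner N h u u + inner N h (Dx N h u) (Dx N h u) + inner N h (Dy N h u) (Dy N h u).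
Proof.
  apply sqrt_sqrt. pose proof (inner_sqr_nonneg N h u).
  pose proof (inner_sqr_nonneg N h (Dx N h u)); pose proof (inner_sqr_nonneg N h (Dy N h u)). lra.
Qed.

Lemma flux_diff_energy_le N h mp B Bn Kn K0 p0 pe pn phie phin :
  (1 <= N)%nat -> 0 < mp ->
  on_grid N (fun i j => mp <= p0 i j) ->
  on_grid N (fun i j => 0 <= pe i j) -> on_grid N (fun i j => 0 <= pn i j) ->
  nLinf N phie <= B -> nLinf N phin <= Bn -> ngradLinf N h pn <= Kn -> ngradLinf N h p0 <= K0 ->
  let Gx := flux_diff_x N h p0 phie pe phin pn in
  let Gy := flux_diff_y N h p0 phie pe phin pn in
  let eph := gsub phie phin in
  let ep := gsub pe pn in
  inner N h Gx Gx + inner N h Gy Gy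
  <= 4 * flux_const mp B Bn (Kn + K0) * (nL2 N h eph * nL2 N h eph + nH1 N h ep * nH1 N h ep).
Proof.
  intros HN Hmp Hp0 Hpe Hpn Hphie Hphin Hpn' Hp0' Gx Gy eph ep.
  set (c := flux_const mp B Bn (Kn + K0)).
  assert (Hphie_pt := on_grid_le_trans N _ _ _ (Rabs_le_nLinf N phie) Hphie).
  assert (Hphin_pt := on_grid_le_trans N _ _ _ (Rabs_le_nLinf N phin) Hphin).
  assert (HDxpn := on_grid_le_trans N _ _ _ (Rabs_Dx_le_ngradLinf N h pn) Hpn').
  assert (HDypn := on_grid_le_trans N _ _ _ (Rabs_Dy_le_ngradLinf N h pn) Hpn').
  assert (HDxp0 := on_grid_le_trans N _ _ _ (Rabs_Dx_le_ngradLinf N h p0) Hp0').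
  assert (HDyp0 := on_grid_le_trans N _ _ _ (Rabs_Dy_le_ngradLinf N h p0) Hp0').
  assert (Hx : gsum N (fun i j => Gx i j * Gx i j)
               <= c * (2 * gsum N (fun i j => eph i j * eph i j) + 2 * gsum N (fun i j => ep i j * ep i j)
                       + gsum N (fun i j => Dx N h ep i j * Dx N h ep i j)))
    by exact (gsum_fluxx_diff_sqr_le N h mp B Bn Kn K0 p0 pe pn phie phin HN Hmp Hp0 Hpe Hpn
                Hphie_pt Hphin_pt HDxpn HDxp0).
  (* the y-direction is the x-direction for the transposed grid functions *)
  assert (Hy : gsum N (fun i j => Gy i j * Gy i j)
               <= c * (2 * gsum N (fun i j => eph i j * eph i j) + 2 * gsum N (fun i j => ep i j * ep i j)
                       + gsum N (fun i j => Dy N h ep i j * Dy N h ep i j))).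
  { rewrite <- (gsum_gtr N (fun i j => Gy i j * Gy i j)), <- (gsum_gtr N (fun i j => eph i j * eph i j)),
      <- (gsum_gtr N (fun i j => ep i j * ep i j)), <- (gsum_gtr N (fun i j => Dy N h ep i j * Dy N h ep i j)).
    exact (gsum_fluxx_diff_sqr_le N h mp B Bn Kn K0 (gtr p0) (gtr pe) (gtr pn) (gtr phie) (gtr phin) HN Hmp
             (on_grid_gtr _ _ Hp0) (on_grid_gtr _ _ Hpe) (on_grid_gtr _ _ Hpn)
             (on_grid_gtr _ _ Hphie_pt) (on_grid_gtr _ _ Hphin_pt)
             (on_grid_gtr _ _ HDypn) (on_grid_gtr _ _ HDyp0)). }
  rewrite nL2_sqr, nH1_sqr, !inner_gsum.
  assert (Hhc : 0 <= h ^ 2 * c) by (apply Rmult_le_pos; [apply pow2_ge_0|apply flux_const_nonneg]).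
  pose proof (gsum_sqr_nonneg N (Dx N h ep)); pose proof (gsum_sqr_nonneg N (Dy N h ep)).
  apply Rle_trans with (h ^ 2 * (c * (4 * gsum N (fun i j => eph i j * eph i j)
    + 4 * gsum N (fun i j => ep i j * ep i j) + gsum N (fun i j => Dx N h ep i j * Dx N h ep i j)
    + gsum N (fun i j => Dy N h ep i j * Dy N h ep i j)))).
  - rewrite <- Rmult_plus_distr_l. apply Rmult_le_compat_l; [apply pow2_ge_0|lra].
  - nra.
Qed.

Lemma inner_T1_le N h mp B Bn Kn K0 p0 pe pn phie phin f :
  (1 <= N)%nat -> 0 < mp ->
  on_grid N (fun i j => mp <= p0 i j) ->
  on_grid N (fun i j => 0 <= pe i j) -> on_grid N (fun i j => 0 <= pn i j) ->
  nLinf N phie <= B -> nLinf N phin <= Bn -> ngradLinf N h pn <= Kn -> ngradLinf N h p0 <= K0 ->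
  Rabs (inner N h (T1 N h p0 phie pe phin pn) f)
  <= sqrt (4 * flux_const mp B Bn (Kn + K0))
     * (nL2 N h (gsub phie phin) + nH1 N h (gsub pe pn)) * ngradL2 N h f.
Proof.
  intros HN Hmp Hp0 Hpe Hpn Hphie Hphin Hpn' Hp0'.
  eapply Rle_trans; [apply (inner_divh_le N h (flux_diff_x N h p0 phie pe phin pn)
                                          (flux_diff_y N h p0 phie pe phin pn) f HN)|].
  apply Rmult_le_compat_r; [apply sqrt_pos|].
  eapply Rle_trans; [apply sqrt_le_1_alt, flux_diff_energy_le; eassumption|].
  apply sqrt_scal_sum_sqr_le.
  - pose proof (flux_const_nonneg mp B Bn (Kn + K0)). lra.
  - apply sqrt_pos.
  - apply sqrt_pos.
Qed.

Lemma lt_S_Int_part m tau T : 0 < tau -> INR m * tau <= T ->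
  (m < S (Z.to_nat (Int_part (T / tau))))%nat.
Proof.
  intros Htau Hm.
  assert (Hmle : INR m <= T / tau).
  { apply Rmult_le_reg_r with tau; [exact Htau|]. unfold Rdiv. rewrite Rmult_assoc, Rinv_l; lra. }
  destruct (base_Int_part (T / tau)) as [_ Hfrac].
  assert (Hlt : (Z.of_nat m < Int_part (T / tau) + 1)%Z).
  { apply lt_IZR. rewrite plus_IZR, <- INR_IZR_INZ. lra. }
  lia.
Qed.

Lemma nLinf_le_Bconst N h T tau phi p m : 0 < tau -> INR m * tau <= T ->
  nLinf N (restr h (fun x y => phi x y (INR m * tau))) <= Bconst N h T tau phi p.
Proof.
  intros Htau Hm. unfold Bconst.
  eapply Rle_trans; [|apply (maxN_ge _ _ m (lt_S_Int_part m tau T Htau Hm))]. cbv beta zeta.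
  pose proof (nLinf_nonneg N (restr h (fun x y => p x y (INR m * tau)))).
  assert (0 <= gradLinf_cont N h (fun x y => p x y (INR m * tau))) by apply maxN_nonneg.
  lra.
Qed.

Lemma spimex_pn_nonneg N h D eta tau p0h phi_init p_init phin pn m :
  spimex N h D eta tau p0h phi_init p_init phin pn ->
  on_grid N (fun i j => 0 <= p_init i j) -> on_grid N (fun i j => 0 <= pn m i j).
Proof.
  intros [Hinit Hstep] Hp i j Hi Hj. destruct m as [|k].
  - destruct (Hinit i j Hi Hj) as [_ ->]. exact (Hp i j Hi Hj).
  - destruct (Hstep k) as (phit & pt & _ & Hnonneg & _). exact (proj2 (Hnonneg i j Hi Hj)).
Qed.

Theorem lemma3p4 :
  forall (B mp Ct : R), 0 < mp -> 0 < Ct ->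
  exists C : R,
  forall (D eta T L tau Mp : R) (N : nat) (p0 : R -> R -> R)
         (phi p : R -> R -> R -> R) (phin pn : nat -> gf),
  0 < D -> 0 < eta -> 0 < T -> 0 < L -> (1 <= N)%nat -> 0 < tau ->
  p0_ok L mp Mp p0 ->
  crime_solution D eta T L p0 phi p ->
  let h := L / INR N in
  let phih := fun t => restr h (fun x y => phi x y t) in
  let ph := fun t => restr h (fun x y => p x y t) in
  spimex N h D eta tau (restr h p0) (phih 0) (ph 0) phin pn ->
  ngradLinf N h (restr h p0) <= Ct ->
  B = Bconst N h T tau phi p ->
  forall m : nat, INR m * tau <= T ->
  nLinf N (phin m) + nLinf N (pn m) + ngradLinf N h (pn m) <= B + 1 ->
  forall f : gf,
    Rabs (inner N h (T1 N h (restr h p0) (phih (INR m * tau)) (ph (INR m * tau))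
                         (phin m) (pn m)) f)
    <= C * (nL2 N h (gsub (phih (INR m * tau)) (phin m))
            + nH1 N h (gsub (ph (INR m * tau)) (pn m))) * ngradL2 N h f.
Proof.
  intros B mp Ct Hmp _. exists (sqrt (4 * flux_const mp B (B + 1) (B + 1 + Ct))).
  intros D eta T L tau Mp N p0 phi p phin pn _ _ _ _ HN Htau [_ [_ [Hp0 _]]] [_ [Hsol _]]
    h phih ph Hscheme Hp0grad HB m Hm Hbound f.
  assert (Ht : 0 <= INR m * tau <= T) by (split; [apply Rmult_le_pos; [apply pos_INR|lra]|exact Hm]).
  pose proof (nLinf_nonneg N (phin m)); pose proof (nLinf_nonneg N (pn m)).
  pose proof (ngradLinf_nonneg N h (pn m)).
  apply inner_T1_le.
  - exact HN.
  - exact Hmp.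
  - intros i j _ _. apply Hp0.
  - intros i j _ _. apply (Hsol _ _ _ Ht).
  - apply (spimex_pn_nonneg _ _ _ _ _ _ _ _ _ _ m Hscheme).
    intros i j _ _. apply (Hsol _ _ 0). lra.
  - rewrite HB. apply nLinf_le_Bconst; assumption.
  - lra.
  - lra.
  - exact Hp0grad.
Qed.
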